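(* Let $\theta=(k_r)$ be a lacunary sequence, $m\ge0$ an integer, $0<\beta\le1$ and $0<p<\infty$. If $\liminf_r q_r>1$, then $w_p^\beta(F,\Delta^m)\subseteq N_\theta^\beta(p,F,\Delta^m)$.
   Context: A fuzzy number is a map $X:\mathbb{R}\to[0,1]$ which is normal, fuzzy convex, upper semicontinuous, with compact closure of $\{t:X(t)>0\}$; $L(\mathbb{R})$ is the set of fuzzy numbers. Level sets $[X]^\alpha=\{t:X(t)\ge\alpha\}$ ($\alpha\in(0,1]$), $[X]^0=\overline{\{t:X(t)>0\}}$, are compact intervals $[u^\alpha,v^\alpha]$. Subtraction: $[X-Y]^\alpha=[u_1^\alpha-v_2^\alpha,v_1^\alpha-u_2^\alpha]$. Metric: $d(X,Y)=\sup_{\alpha\in[0,1]}\max\{|u_1^\alpha-u_2^\alpha|,|v_1^\alpha-v_2^\alpha|\}$. $(\Delta^0X)_k=X_k$, $(\Delta^1X)_k=X_k-X_{k+1}$, $(\Delta^mX)_k=(\Delta^1(\Delta^{m-1}X))_k$. A lacunary sequence is an increasing integer sequence $\theta=(k_r)_{r\ge0}$ with $k_0=0$, $h_r=k_r-k_{r-1}\to\infty$; $I_r=(k_{r-1},k_r]$, $q_r=k_r/k_{r-1}$. $N_\theta^\beta(p,F,\Delta^m)$: sequences $X$ of fuzzy numbers with some $X_0\in L(\mathbb{R})$ such that $\lim_r\frac{1}{h_r^\beta}\sum_{k\in I_r}d(\Delta^mX_k,X_0)^p=0$. $w_p^\beta(F,\Delta^m)$: sequences $X$ with some $X_0\in L(\mathbb{R})$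 such that $\lim_{n\to\infty}\frac{1}{n^\beta}\sum_{k=1}^n d(\Delta^mX_k,X_0)^p=0$. *)

From HB Require Import structures.
From mathcomp Require Import all_boot all_order all_algebra.
From mathcomp Require Import all_classical all_reals all_analysis.
Set Implicit Arguments. Unset Strict Implicit. Unset Printing Implicit Defensive.
Import Order.TTheory GRing.Theory Num.Theory.
Import numFieldNormedType.Exports.
Local Open Scope classical_set_scope.
Local Open Scope ring_scope.

Section Fuzzy.
Variable R : realType.

Definition fuzzy := R -> R.

Definition is_fuzzy (X : fuzzy) : Prop :=
  [/\ (forall t, 0 <= X t <= 1),
      (exists t, X t = 1),
      (forall s t l, 0 <= l <= 1 -> Num.min (X s) (X t) <= X (l * s + (1 - l) * t)),
      (forall t e, 0 < e -> \forall s \near t, X s < X t + e) &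
      compact (closure [set t | 0 < X t])].

Definition level (X : fuzzy) (a : R) : set R :=
  if 0 < a then [set t | a <= X t] else closure [set t | 0 < X t].

Definition lo (X : fuzzy) (a : R) : R := inf (level X a).
Definition hi (X : fuzzy) (a : R) : R := sup (level X a).

(* X - Y: the fuzzy number whose a-level sets are
   [u1^a - v2^a, v1^a - u2^a]; its membership function is recovered from
   the level sets by (X - Y)(t) = sup {a in [0,1] | t in [X - Y]^a}. *)
Definition fsub (X Y : fuzzy) : fuzzy := fun t =>
  sup [set a | a = 0 \/ (0 < a <= 1 /\ lo X a - hi Y a <= t <= hi X a - lo Y a)].

Definition fdist (X Y : fuzzy) : R :=
  sup [set e | exists a, 0 <= a <= 1 /\
        e = Num.max `|lo X a - lo Y a| `|hi X a - hi Y a|].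

Fixpoint fdelta (m : nat) (X : nat -> fuzzy) (k : nat) : fuzzy :=
  match m with
  | 0 => X k
  | m'.+1 => fsub (fdelta m' X k) (fdelta m' X k.+1)
  end.

Definition hr (th : nat -> nat) (r : nat) : nat := (th r - th r.-1)%N.

Definition lacunary (th : nat -> nat) : Prop :=
  [/\ th 0 = 0%N, (forall r, (th r < th r.+1)%N) &
      (forall M : nat, exists N : nat, forall r, (N <= r)%N -> (M <= hr th r)%N)].

Definition qr (th : nat -> nat) (r : nat) : R := (th r)%:R / (th r.-1)%:R.

Definition N_theta (th : nat -> nat) (p b : R) (m : nat) : set (nat -> fuzzy) :=
  [set X | (forall k, is_fuzzy (X k)) /\
     exists X0, is_fuzzy X0 /\
       (fun r => (\sum_((th r.-1).+1 <= k < (th r).+1)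
                    powR (fdist (fdelta m X k) X0) p) / powR (hr th r)%:R b)
         @ \oo --> (0 : R)].

Definition w_space (p b : R) (m : nat) : set (nat -> fuzzy) :=
  [set X | (forall k, is_fuzzy (X k)) /\
     exists X0, is_fuzzy X0 /\
       (fun n : nat => (\sum_(1 <= k < n.+1) powR (fdist (fdelta m X k) X0) p)
                         / powR n%:R b)
         @ \oo --> (0 : R)].

End Fuzzy.

From HB Require Import structures.
From mathcomp Require Import all_boot all_order all_algebra.
From mathcomp Require Import all_classical all_reals all_analysis.
From mathcomp Require Import lra.
Set Implicit Arguments. Unset Strict Implicit.
Import Order.TTheory GRing.Theory Num.Theory.
Import numFieldNormedType.Exports.
Local Open Scope classical_set_scope.
Local Open Scope ring_scope.

(* Fix [c] with [1 < c <= q_r] for all large [r].  Then [k_(r-1) <= k_r / c],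
   so [h_r = k_r - k_(r-1) >= (1 - 1/c) k_r], and since [I_r] is contained in
   [1, k_r] the block average over [I_r] is at most [(1 - 1/c)^(-beta)] times
   the Cesaro-type average up to [k_r].  The latter tends to [0] along the
   subsequence [k_r] because [w_p^beta] membership says it does along all [n]. *)

Lemma gt_limn_einf (R : realType) (a : R) (u : R^nat) :
  (a%:E < limn_einf (fun n => (u n)%:E))%E ->
  exists2 c, a < c & \forall n \near \oo, c <= u n.
Proof.
rewrite limn_einf_lim (cvg_lim _ (@cvg_einfs_sup _ _)) //.
move=> /ereal_sup_gt[_ [N _ <-]].
have einfs_le n : (N <= n)%N -> (einfs (fun n => (u n)%:E) N <= (u n)%:E)%E.
  by move=> Nn; apply: ereal_inf_lbound; exists n.
move: einfs_le; case: (einfs _ N) => [r| |] // einfs_le.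
- rewrite lte_fin => ar; exists ((a + r) / 2); first lra.
  by exists N => // n /einfs_le; rewrite lee_fin => rn; lra.
- by move=> _; exists (a + 1); [lra | exists N => // n /einfs_le].
Qed.

Lemma leq_incr_id (f : nat -> nat) : (forall n, (f n < f n.+1)%N) ->
  forall n, (n <= f n)%N.
Proof. by move=> f_incr; elim=> // n IH; apply: leq_ltn_trans IH (f_incr n). Qed.

Lemma cvgn_incr_infty (f : nat -> nat) : (forall n, (f n < f n.+1)%N) ->
  f @ \oo --> \oo.
Proof.
move=> f_incr P [N _ NP]; exists N => // n /= Nn; apply: NP => /=.
exact: leq_trans Nn (leq_incr_id f_incr n).
Qed.

Lemma subr_ge_ratio (R : realFieldType) (c x y : R) : 0 < c ->
  c * y <= x -> (1 - c^-1) * x <= x - y.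
Proof.
move=> c_gt0 cy_le_x.
by rewrite mulrBl mul1r lerD2l lerN2 mulrC ler_pdivlMr // mulrC.
Qed.

Section block_average.
Variables (R : realType) (a : nat -> R) (b c : R).
Hypotheses (a_ge0 : forall k, 0 <= a k) (b_ge0 : 0 <= b) (c_gt1 : 1 < c).

Lemma block_sum_le (j n : nat) : (j <= n)%N ->
  \sum_(j.+1 <= k < n.+1) a k <= \sum_(1 <= k < n.+1) a k.
Proof.
move=> jn; rewrite [leRHS](big_cat_nat _ (n := j.+1)) //= lerDr.
by apply: sumr_ge0 => k _.
Qed.

Lemma block_average_le (j n : nat) : (0 < j)%N -> c * j%:R <= n%:R ->
  (\sum_(j.+1 <= k < n.+1) a k) / powR (n - j)%:R b <=
  (powR (1 - c^-1) b)^-1 * ((\sum_(1 <= k < n.+1) a k) / powR n%:R b).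
Proof.
move=> j_gt0 cj_le_n.
have j_gt0R : 0 < j%:R :> R by rewrite ltr0n.
have jn : (j < n)%N by rewrite -(ltr_nat R) (lt_le_trans _ cj_le_n) ?ltr_pMl.
have n_gt0R : 0 < n%:R :> R by rewrite ltr0n (leq_ltn_trans _ jn).
have e_gt0 : 0 < 1 - c^-1 by rewrite subr_gt0 invf_lt1 ?(lt_trans ltr01 c_gt1).
have hn_ge : powR (1 - c^-1) b * powR n%:R b <= powR (n - j)%:R b.
  rewrite -powRM ?(ltW e_gt0) ?(ltW n_gt0R) //.
  apply: ge0_ler_powR; rewrite ?nnegrE ?mulr_ge0 ?(ltW e_gt0) ?(ltW n_gt0R) //.
  by rewrite natrB ?(ltnW jn) // subr_ge_ratio ?(lt_trans ltr01 c_gt1).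
have pe_gt0 : 0 < powR (1 - c^-1) b by apply: powR_gt0.
have pn_gt0 : 0 < powR n%:R b by apply: powR_gt0.
have S_ge0 : 0 <= \sum_(1 <= k < n.+1) a k by apply: sumr_ge0 => k _.
have inv_ge0 : 0 <= (powR (n - j)%:R b)^-1 by rewrite invr_ge0 powR_ge0.
apply: le_trans (ler_wpM2r inv_ge0 (block_sum_le (ltnW jn))) _.
rewrite mulrCA -invfM ler_wpM2l // lef_pV2 ?posrE ?mulr_gt0 //.
exact: lt_le_trans (mulr_gt0 pe_gt0 pn_gt0) hn_ge.
Qed.

End block_average.

Theorem theorem2p14 (R : realType) (th : nat -> nat) (m : nat) (b p : R) :
  lacunary th -> 0 < b <= 1 -> 0 < p ->
  (1%:E < limn_einf (fun r => (qr R th r)%:E))%E ->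
  w_space p b m `<=` N_theta th p b m.
Proof.
move=> [_ th_incr _] /andP[b_gt0 _] _ /gt_limn_einf[c c_gt1 c_le_q].
move=> X [X_fuzzy [X0 [X0_fuzzy avg_cvg0]]]; split=> //; exists X0; split=> //.
set a := fun k => powR (fdist (fdelta m X k) X0) p.
have a_ge0 k : 0 <= a k by apply: powR_ge0.
set avg := fun n : nat => (\sum_(1 <= k < n.+1) a k) / powR n%:R b.
have avg_th_cvg0 : avg \o th @ \oo --> 0.
  exact: cvg_comp (cvgn_incr_infty th_incr) avg_cvg0.
have bound_cvg0 : (fun r => (powR (1 - c^-1) b)^-1 * avg (th r)) @ \oo --> 0.
  by rewrite -(mulr0 (powR (1 - c^-1) b)^-1); exact: cvgMl_tmp.
apply: (squeeze_cvgr _ (cvg_cst 0) bound_cvg0).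
near=> r.
have th_pred_gt0 : (0 < th r.-1)%N.
  apply: leq_trans (leq_incr_id th_incr r.-1).
  by near: r; exists 2%N => // -[|[|r]].
have c_th_le : c * (th r.-1)%:R <= (th r)%:R.
  by rewrite -ler_pdivlMr ?ltr0n //; near: r.
apply/andP; split.
  by rewrite divr_ge0 ?powR_ge0 //; apply: sumr_ge0 => k _; exact: a_ge0.
exact: (block_average_le a_ge0 (ltW b_gt0) c_gt1 th_pred_gt0 c_th_le).
Unshelve. all: end_near.
Qed.
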